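(* Let $\Lambda$ be a singly aligned left cancellative small category. Then \[S_\Lambda=\{\alpha\beta^*:\alpha,\beta\in\Lambda,\ s(\alpha)=s(\beta)\}\cup\{0\}.\] Moreover, for $\alpha,\beta,\gamma,\tau\in\Lambda$ with $s(\alpha)=s(\beta)$ and $s(\gamma)=s(\tau)$, we have $\alpha\beta^*=\gamma\tau^*$ if and only if there is an invertible $u\in\Lambda$ with $\alpha u=\gamma$ and $\beta u=\tau$. The product in $S_\Lambda$ is given by \[\alpha\beta^*\gamma\tau^*=\begin{cases}\alpha\gamma_1(\tau\beta_1)^* & \text{if }\beta\Lambda\cap\gamma\Lambda=\rho\Lambda\text{ with }\rho=\beta\beta_1=\gamma\gamma_1,\\ 0&\text{otherwise,}\end{cases}\] and all products involving $0$ equal $0$.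
   Context: $\Lambda$ is a small category (objects $\Lambda^0$, range $r$, source $s$), left cancellative ($\alpha\beta=\alpha\gamma\Rightarrow\beta=\gamma$), and singly aligned: for all $\alpha,\beta$, $\alpha\Lambda\cap\beta\Lambda$ is either empty or equal to $\rho\Lambda$ for some $\rho\in\Lambda$, where $\alpha\Lambda=\{\alpha\beta:s(\alpha)=r(\beta)\}$. An element $u$ is invertible if $uv=r(u)$ for some $v$. Each $\alpha\in\Lambda$ is the partial bijection $s(\alpha)\Lambda\to\alpha\Lambda$, $\beta\mapsto\alpha\beta$, in the symmetric inverse monoid $\mathcal{I}(\Lambda)$ (composition on largest possible domain, zero = empty map $0$), with inverse $\alpha^*:\alpha\beta\mapsto\beta$; $S_\Lambda$ is the inverse subsemigroup of $\mathcal{I}(\Lambda)$ generated by these maps, and $\alpha\beta^*$ denotes composition. *)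

(* A small category in "path" convention: [comp a b] is the composite "a b",
   defined (meaningful) when [s a = r b]; [r] = range, [s] = source. *)
Record Cat := {
  Ob : Type;
  Mor : Type;
  r : Mor -> Ob;
  s : Mor -> Ob;
  idm : Ob -> Mor;
  comp : Mor -> Mor -> Mor;
  r_idm : forall v, r (idm v) = v;
  s_idm : forall v, s (idm v) = v;
  r_comp : forall a b, s a = r b -> r (comp a b) = r a;
  s_comp : forall a b, s a = r b -> s (comp a b) = s b;
  comp_idl : forall a, comp (idm (r a)) a = a;
  comp_idr : forall a, comp a (idm (s a)) = a;
  comp_assoc : forall a b c, s a = r b -> s b = r c ->
      comp a (comp b c) = comp (comp a b) c
}.

Arguments r {c0}.
Arguments s {c0}.
Arguments idm {c0}.
Arguments comp {c0}.

Definition rideal {C : Cat} (a : Mor C) : Mor C -> Prop :=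
  fun x => exists b, s a = r b /\ x = comp a b.

Definition left_cancellative (C : Cat) : Prop :=
  forall a b c : Mor C, s a = r b -> s a = r c -> comp a b = comp a c -> b = c.

Definition singly_aligned (C : Cat) : Prop :=
  forall a b : Mor C,
    (forall x, ~ (rideal a x /\ rideal b x)) \/
    (exists rho : Mor C, forall x, (rideal a x /\ rideal b x) <-> rideal rho x).

Definition invertible {C : Cat} (u : Mor C) : Prop :=
  exists v, s u = r v /\ comp u v = idm (r u).

(* Partial maps on a set X, represented by their graphs: [f x y] means f x = y. *)
Definition pmap (X : Type) := X -> X -> Prop.

(* composition f g = "f after g", on the largest possible domain *)
Definition pcomp {X} (f g : pmap X) : pmap X := fun x z => exists y, g x y /\ f y z.
Definition pinv {X} (f : pmap X) : pmap X := fun x y => f y x.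
Definition pzero {X} : pmap X := fun _ _ => False.

(* alpha as the partial bijection s(alpha)Lambda -> alpha Lambda, beta |-> alpha beta *)
Definition embed {C : Cat} (a : Mor C) : pmap (Mor C) :=
  fun x y => r x = s a /\ y = comp a x.
Definition adj {C : Cat} (a : Mor C) : pmap (Mor C) := pinv (embed a).

(* S_Lambda: inverse subsemigroup (with zero) of I(Lambda) generated by the maps alpha *)
Inductive inS (C : Cat) : pmap (Mor C) -> Prop :=
  | inS_gen : forall a : Mor C, inS C (embed a)
  | inS_zero : inS C pzero
  | inS_mul : forall f g, inS C f -> inS C g -> inS C (pcomp f g)
  | inS_inv : forall f, inS C f -> inS C (pinv f).

(* Everything happens inside the inverse monoid of partial maps: [alpha beta^*]
   and [gamma tau^*] compose through [beta^* gamma], and left cancellation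
   identifies [beta^* gamma] with [gamma_1 beta_1^*] when
   [beta Lambda ∩ gamma Lambda = rho Lambda], [rho = beta gamma_1 = gamma beta_1],
   and with [0] when the intersection is empty.  So the set of all
   [alpha beta^*] together with [0] is closed under products and inverses,
   and, containing the generators [alpha = alpha s(alpha)^*], it is [S_Lambda].
   Evaluating [alpha beta^*] at [beta] shows that equal elements differ by a
   right factor, which left cancellation forces to be invertible. *)

From Stdlib Require Import FunctionalExtensionality PropExtensionality.

Lemma pmap_ext {X} (f g : pmap X) : (forall x y, f x y <-> g x y) -> f = g.
Proof.
  intros Hfg.
  apply functional_extensionality; intro x.
  apply functional_extensionality; intro y.
  apply propositional_extensionality, Hfg.
Qed.

Section PartialMaps.

Context {X : Type}.
Implicit Types f g h : pmap X.

Lemma pcomp_assoc f g h : pcomp f (pcomp g h) = pcomp (pcomp f g) h.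
Proof. apply pmap_ext; unfold pcomp; firstorder. Qed.

Lemma pinv_pcomp f g : pinv (pcomp f g) = pcomp (pinv g) (pinv f).
Proof. apply pmap_ext; unfold pinv, pcomp; firstorder. Qed.

Lemma pcomp_zero_l f : pcomp pzero f = pzero.
Proof. apply pmap_ext; unfold pcomp, pzero; firstorder. Qed.

Lemma pcomp_zero_r f : pcomp f pzero = pzero.
Proof. apply pmap_ext; unfold pcomp, pzero; firstorder. Qed.

End PartialMaps.

Section Embeddings.

Variable C : Cat.
Implicit Types a b c t u : Mor C.

Lemma rideal_refl a : rideal a a.
Proof. exists (idm (s a)); rewrite r_idm, comp_idr; auto. Qed.

Lemma comp_idm_l v a : r a = v -> comp (idm v) a = a.
Proof. intros <-; apply comp_idl. Qed.

Lemma embed_comp a b : s a = r b -> embed (comp a b) = pcomp (embed a) (embed b).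
Proof.
  intros Hab; apply pmap_ext; intros x z; unfold pcomp, embed; split.
  - intros [Hx ->]; rewrite s_comp in Hx by auto.
    exists (comp b x); rewrite r_comp by auto.
    repeat split; auto; symmetry; apply comp_assoc; congruence.
  - intros [y [[Hx ->] [Hy ->]]]; rewrite s_comp by auto.
    split; auto; apply comp_assoc; congruence.
Qed.

Lemma adj_comp a b : s a = r b -> adj (comp a b) = pcomp (adj b) (adj a).
Proof. intros Hab; unfold adj; rewrite embed_comp by auto; apply pinv_pcomp. Qed.

Lemma adj_idm (v : Ob C) : adj (idm v) = embed (idm v).
Proof.
  apply pmap_ext; intros x z; unfold adj, pinv, embed; rewrite s_idm; split;
    intros [Hr ->]; rewrite !(comp_idm_l _ _ Hr); split; auto.
Qed.

Lemma embed_adj_idm a : embed a = pcomp (embed a) (adj (idm (s a))).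
Proof.
  rewrite adj_idm, <- embed_comp by (rewrite r_idm; auto).
  now rewrite comp_idr.
Qed.

Lemma pinv_embed_adj a b : pinv (pcomp (embed a) (adj b)) = pcomp (embed b) (adj a).
Proof. apply pinv_pcomp. Qed.

Lemma embed_adj_maps a b : s a = s b -> pcomp (embed a) (adj b) b a.
Proof.
  intros Hab; exists (idm (s b)); unfold adj, pinv, embed.
  rewrite r_idm, comp_idr; split; auto.
  rewrite <- Hab, comp_idr; auto.
Qed.

Lemma embed_adjP a b x z :
  pcomp (embed a) (adj b) x z <->
  exists y, r y = s b /\ r y = s a /\ x = comp b y /\ z = comp a y.
Proof. unfold pcomp, adj, pinv, embed; firstorder. Qed.

Lemma embed_adj_invertible u : invertible u -> pcomp (embed u) (adj u) = embed (idm (r u)).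
Proof.
  intros [v [Huv Hid]].
  assert (Hv : s v = r u) by (rewrite <- (s_idm C (r u)), <- Hid, s_comp; auto).
  apply pmap_ext; intros x z; rewrite embed_adjP; unfold embed; rewrite s_idm.
  split.
  - intros [y [Hy [_ [-> ->]]]].
    assert (Hry : r (comp u y) = r u) by (apply r_comp; auto).
    split; [|rewrite comp_idm_l]; auto.
  - intros [Hx ->].
    assert (Hvx : comp u (comp v x) = x).
    { rewrite comp_assoc, Hid by congruence; apply comp_idm_l; auto. }
    exists (comp v x); rewrite r_comp, comp_idm_l, Hvx by congruence.
    repeat split; auto.
Qed.

Lemma embed_adj_comp_invertible a b u :
  s a = s b -> s a = r u -> invertible u ->
  pcomp (embed (comp a u)) (adj (comp b u)) = pcomp (embed a) (adj b).
Proof.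
  intros Hab Hau Hu.
  rewrite embed_comp, adj_comp by congruence.
  rewrite <- pcomp_assoc, (pcomp_assoc (embed u)), embed_adj_invertible by auto.
  rewrite pcomp_assoc, <- embed_comp by (rewrite r_idm; auto).
  now rewrite <- Hau, comp_idr.
Qed.

Lemma adj_embed_disjoint b c :
  (forall x, ~ (rideal b x /\ rideal c x)) -> pcomp (adj b) (embed c) = pzero.
Proof.
  intros Hdisj; apply pmap_ext; intros x z; unfold pcomp, adj, pinv, embed, pzero.
  split; [|intros []].
  intros [y [[Hx ->] [Hz Hy]]].
  apply (Hdisj (comp c x)); split; [exists z | exists x]; auto.
Qed.

Lemma embed_adj_mul_disjoint a b c t :
  (forall x, ~ (rideal b x /\ rideal c x)) ->
  pcomp (pcomp (embed a) (adj b)) (pcomp (embed c) (adj t)) = pzero.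
Proof.
  intros Hdisj.
  rewrite <- !pcomp_assoc, (pcomp_assoc (adj b)), adj_embed_disjoint by auto.
  now rewrite pcomp_zero_l, pcomp_zero_r.
Qed.

Definition zero_or_embed_adj (f : pmap (Mor C)) : Prop :=
  f = pzero \/ exists a b, s a = s b /\ f = pcomp (embed a) (adj b).

Lemma zero_or_embed_adj_pinv f : zero_or_embed_adj f -> zero_or_embed_adj (pinv f).
Proof.
  intros [-> | [a [b [Hab ->]]]]; [left; reflexivity | right].
  exists b, a; split; auto; apply pinv_embed_adj.
Qed.

Lemma zero_or_embed_adj_inS f : zero_or_embed_adj f -> inS C f.
Proof.
  intros [-> | [a [b [_ ->]]]]; [apply inS_zero|].
  apply inS_mul; [apply inS_gen | apply inS_inv, inS_gen].
Qed.

Section LeftCancellative.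

Hypothesis Hlc : left_cancellative C.

Lemma comp_cancel_comp c b1 x m :
  s c = r b1 -> s b1 = r m -> s c = r x ->
  comp c x = comp (comp c b1) m -> x = comp b1 m.
Proof.
  intros Hcb1 Hb1m Hcx Heq; apply (Hlc c); auto.
  - rewrite r_comp; auto.
  - rewrite comp_assoc; auto.
Qed.

Lemma adj_embed_meet b c b1 c1 rho :
  s b = r c1 -> s c = r b1 -> rho = comp b c1 -> rho = comp c b1 ->
  (forall x, (rideal b x /\ rideal c x) <-> rideal rho x) ->
  pcomp (adj b) (embed c) = pcomp (embed c1) (adj b1).
Proof.
  intros Hbc1 Hcb1 Hrho_b Hrho_c Hmeet.
  assert (Hc1 : s rho = s c1) by (rewrite Hrho_b; apply s_comp; auto).
  assert (Hb1 : s rho = s b1) by (rewrite Hrho_c; apply s_comp; auto).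
  apply pmap_ext; intros x z; unfold pcomp, adj, pinv, embed; split.
  - intros [y [[Hx ->] [Hz Hy]]].
    destruct (proj1 (Hmeet (comp c x))) as [m [Hm Hcx]].
    { split; [exists z | exists x]; auto. }
    exists m; repeat split; try congruence.
    + apply (comp_cancel_comp c b1); try congruence.
    + apply (comp_cancel_comp b c1); congruence.
  - intros [m [[Hm ->] [Hm' ->]]].
    exists (comp c (comp b1 m)); rewrite !r_comp by congruence.
    repeat split; auto.
    rewrite !comp_assoc, <- Hrho_b, <- Hrho_c by congruence; auto.
Qed.

Lemma embed_adj_eq_invertible a b c t :
  s a = s b -> s c = s t ->
  pcomp (embed a) (adj b) = pcomp (embed c) (adj t) ->
  exists u, invertible u /\ s a = r u /\ comp a u = c /\ comp b u = t.
Proof.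
  intros Hab Hct Heq.
  pose proof (embed_adj_maps a b Hab) as Hba; rewrite Heq in Hba.
  pose proof (embed_adj_maps c t Hct) as Htc; rewrite <- Heq in Htc.
  apply embed_adjP in Hba as [y [Hyt [_ [Hb _]]]].
  apply embed_adjP in Htc as [u [Hub [Hua [Ht Hc]]]].
  exists u; repeat split; auto.
  assert (Hsu : s u = r y) by (rewrite Hyt, Ht, s_comp; auto).
  exists y; split; auto.
  apply (Hlc b).
  - rewrite r_comp; auto.
  - rewrite r_idm; auto.
  - rewrite comp_assoc, <- Ht, <- Hb, Hub by auto; symmetry; apply comp_idr.
Qed.

Lemma embed_adj_mul_meet a b c t rho b1 c1 :
  s a = s b -> s c = s t -> s b = r c1 -> s c = r b1 ->
  rho = comp b c1 -> rho = comp c b1 ->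
  (forall x, (rideal b x /\ rideal c x) <-> rideal rho x) ->
  pcomp (pcomp (embed a) (adj b)) (pcomp (embed c) (adj t))
  = pcomp (embed (comp a c1)) (adj (comp t b1)).
Proof.
  intros Hab Hct Hbc1 Hcb1 Hrho_b Hrho_c Hmeet.
  rewrite <- !pcomp_assoc, (pcomp_assoc (adj b)).
  rewrite (adj_embed_meet b c b1 c1 rho) by auto.
  rewrite embed_comp, adj_comp by congruence.
  now rewrite <- !pcomp_assoc.
Qed.

Section SinglyAligned.

Hypothesis Hsa : singly_aligned C.

Lemma zero_or_embed_adj_pcomp f g :
  zero_or_embed_adj f -> zero_or_embed_adj g -> zero_or_embed_adj (pcomp f g).
Proof.
  intros [-> | [a [b [Hab ->]]]] [-> | [c [t [Hct ->]]]];
    try (left; first [apply pcomp_zero_l | apply pcomp_zero_r]).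
  destruct (Hsa b c) as [Hdisj | [rho Hmeet]].
  - left; apply embed_adj_mul_disjoint; auto.
  - destruct (proj2 (Hmeet rho) (rideal_refl rho)) as [[c1 [Hc1 Hb]] [b1 [Hb1 Hc]]].
    right; exists (comp a c1), (comp t b1); split.
    + rewrite !s_comp by congruence.
      rewrite <- (s_comp C b c1), <- (s_comp C c b1), <- Hb, <- Hc by auto.
      reflexivity.
    + apply (embed_adj_mul_meet a b c t rho); auto.
Qed.

Lemma inS_zero_or_embed_adj f : inS C f -> zero_or_embed_adj f.
Proof.
  induction 1.
  - right; exists a, (idm (s a)); rewrite s_idm; split; auto using embed_adj_idm.
  - left; reflexivity.
  - apply zero_or_embed_adj_pcomp; auto.
  - apply zero_or_embed_adj_pinv; auto.
Qed.

End SinglyAligned.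

End LeftCancellative.

End Embeddings.

Theorem lemma4p11 (C : Cat) (Hlc : left_cancellative C) (Hsa : singly_aligned C) :
  (* S_Lambda = { alpha beta^* : s alpha = s beta } U {0} *)
  (forall f : pmap (Mor C),
      inS C f <->
      (f = pzero \/ exists a b : Mor C, s a = s b /\ f = pcomp (embed a) (adj b)))
  /\
  (* equality of alpha beta^* and gamma tau^* *)
  (forall a b c t : Mor C, s a = s b -> s c = s t ->
      (pcomp (embed a) (adj b) = pcomp (embed c) (adj t) <->
       exists u : Mor C, invertible u /\ s a = r u /\ comp a u = c /\ comp b u = t))
  /\
  (* product formula *)
  (forall a b c t : Mor C, s a = s b -> s c = s t ->
      (forall rho b1 c1 : Mor C,
          s b = r c1 -> s c = r b1 ->
          rho = comp b c1 -> rho = comp c b1 ->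
          (forall x, (rideal b x /\ rideal c x) <-> rideal rho x) ->
          pcomp (pcomp (embed a) (adj b)) (pcomp (embed c) (adj t))
          = pcomp (embed (comp a c1)) (adj (comp t b1)))
      /\
      ((forall x, ~ (rideal b x /\ rideal c x)) ->
          pcomp (pcomp (embed a) (adj b)) (pcomp (embed c) (adj t)) = pzero))
  /\
  (* products involving 0 *)
  (forall f : pmap (Mor C), inS C f -> pcomp f pzero = pzero /\ pcomp pzero f = pzero).
Proof.
  split; [|split; [|split]].
  - intros f; split.
    + apply inS_zero_or_embed_adj; auto.
    + apply zero_or_embed_adj_inS.
  - intros a b c t Hab Hct; split.
    + apply embed_adj_eq_invertible; auto.
    + intros [u [Hu [Hau [<- <-]]]].
      symmetry; apply embed_adj_comp_invertible; auto.
  - intros a b c t Hab Hct; split.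
    + intros rho b1 c1; apply embed_adj_mul_meet; auto.
    + apply embed_adj_mul_disjoint.
  - intros f _; split; [apply pcomp_zero_r | apply pcomp_zero_l].
Qed.
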